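(* Let $f:\mathbb R^n\to\mathbb R$ be convex, differentiable and $L$-Lipschitz smooth, $g:\mathbb R^n\to\mathbb R\cup\{+\infty\}$ proper, closed and convex, $F=f+g$. Let $(\alpha_k)_{k\ge0}\subseteq(0,1]$, $(B_k)_{k\ge0}\subseteq(0,\infty)$, $(\rho_k)_{k\ge0}\subseteq[0,\infty)$, $(\epsilon_k)_{k\ge0}\subseteq(0,\infty)$, and $L_k=B_k+\rho_k$. Given $x_{-1},x^\circ_{-1}\in\mathbb R^n$, let $(y_k,x_k,x^\circ_k)_{k\ge0}$ satisfy for all $k\ge0$: $y_k=\alpha_kx^\circ_{k-1}+(1-\alpha_k)x_{k-1}$; $x_k\approx_{\epsilon_k}T_{L_k}(y_k)$; $D_f(x_k,y_k)\le\frac{B_k}2\|x_k-y_k\|^2$; $x^\circ_k=x_{k-1}+\alpha_k^{-1}(x_k-x_{k-1})$. Then for any $\bar x\in\mathbb R^n$ and all $k\ge0$, $$\frac{\rho_k}2\|x_k-y_k\|^2-\epsilon_k\le(1-\alpha_k)(F(x_{k-1})-F(\bar x))+F(\bar x)-F(x_k)+\frac{\alpha_k^2L_k}2\|\bar x-x^\circ_{k-1}\|^2-\frac{\alpha_k^2L_k}2\|\bar x-x^\circ_k\|^2.$$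
   Context: $D_f(u,w)=f(u)-f(w)-\langle\nabla f(w),u-w\rangle$; $L$-Lipschitz smooth means $D_f(u,w)\le\frac L2\|u-w\|^2$ for all $u,w$. For proper $h$, $\epsilon\ge0$: $\partial_\epsilon h(\bar x)=\{v:\langle v,u-\bar x\rangle\le h(u)-h(\bar x)+\epsilon\ \forall u\}$ for $\bar x\in\operatorname{dom}h$, $\emptyset$ otherwise. $\tilde x\approx_\epsilon T_\rho(x)$ means $\mathbf 0\in\nabla f(x)-\rho(x-\tilde x)+\partial_\epsilon g(\tilde x)$. *)

From HB Require Import structures.
From mathcomp Require Import all_boot all_order all_algebra.
From mathcomp Require Import all_classical all_reals all_analysis.
Set Implicit Arguments. Unset Strict Implicit. Unset Printing Implicit Defensive.
Import Order.TTheory GRing.Theory Num.Theory.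
Import numFieldNormedType.Exports.
Local Open Scope ring_scope.

Section Defs.
Variables (R : realType) (n : nat).
Notation V := 'rV[R]_n.

Definition dotv (u v : V) : R := \sum_(i < n) u 0 i * v 0 i.
Definition sqnorm (u : V) : R := dotv u u.

Definition grad (f : V -> R) (x : V) : V :=
  \row_(i < n) ('d f x (delta_mx 0 i : V)).

Definition differentiable_everywhere (f : V -> R) := forall x : V, differentiable f x.

Definition convex_fun (f : V -> R) :=
  forall (x y : V) (t : R), 0 <= t <= 1 ->
    f (t *: x + (1 - t) *: y) <= t * f x + (1 - t) * f y.

Definition bregman (f : V -> R) (u w : V) : R :=
  f u - f w - dotv (grad f w) (u - w).

Definition lipschitz_smooth (f : V -> R) (L : R) :=
  forall u w : V, bregman f u w <= L / 2 * sqnorm (u - w).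

Definition proper_fun (g : V -> \bar R) :=
  (forall x, g x != -oo%E) /\ exists x, g x \is a fin_num.

Definition closed_fun (g : V -> \bar R) := lower_semicontinuous g.

Definition convex_efun (g : V -> \bar R) :=
  forall (x y : V) (t : R), 0 <= t <= 1 ->
    (g (t *: x + (1 - t) *: y)%R <= t%:E * g x + (1 - t)%R%:E * g y)%E.

Definition esubdiff (h : V -> \bar R) (eps : R) (xb : V) (v : V) : Prop :=
  h xb \is a fin_num /\
  forall u : V, ((dotv v (u - xb)%R)%:E <= h u - h xb + eps%:E)%E.

(* xt ~_eps T_rho(x) : 0 \in grad f x - rho (x - xt) + \partial_eps g (xt) *)
Definition approx_prox (f : V -> R) (g : V -> \bar R) (rho eps : R) (x xt : V) :=
  exists v : V, esubdiff g eps xt v /\ grad f x - rho *: (x - xt) + v = 0.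

(* sequence shifted by one with initial value s_{-1} = s0: prevs s0 s k = s_{k-1} *)
Definition prevs (s0 : V) (s : nat -> V) (k : nat) : V :=
  if k is k'.+1 then s k' else s0.

End Defs.

(* Adding the eps-subgradient inequality of g at x_k, the gradient
   inequality of the convex f at y_k and the descent condition
   D_f(x_k, y_k) <= B_k/2 |x_k - y_k|^2, and using the optimality relation
   v + grad f(y_k) = L_k (y_k - x_k) together with the three-point identity,
   gives for every z
     F(z) >= F(x_k) + rho_k/2 |x_k - y_k|^2 + L_k/2 (|z - x_k|^2 - |z - y_k|^2) - eps_k.
   At z = alpha_k xbar + (1 - alpha_k) x_{k-1} one has z - x_k = alpha_k (xbar - xo_k)
   and z - y_k = alpha_k (xbar - xo_{k-1}), while convexity of F bounds F(z) by
   alpha_k F(xbar) + (1 - alpha_k) F(x_{k-1}). *)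

From HB Require Import structures.
From mathcomp Require Import all_boot all_order all_algebra.
From mathcomp Require Import all_classical all_reals all_analysis.
From mathcomp Require Import ring lra.
Set Implicit Arguments.
Unset Strict Implicit.
Unset Printing Implicit Defensive.
Import Order.TTheory GRing.Theory Num.Theory.
Import numFieldNormedType.Exports.
Local Open Scope ring_scope.

Section Euclidean.
Variables (R : realType) (n : nat).
Implicit Types (u v w z : 'rV[R]_n) (a : R).

Lemma dotvC u v : dotv u v = dotv v u.
Proof. by apply: eq_bigr => i _; rewrite mulrC. Qed.

Lemma dotvDl u v w : dotv (u + v) w = dotv u w + dotv v w.
Proof. by rewrite /dotv -big_split; apply: eq_bigr => i _; rewrite mxE mulrDl. Qed.

Lemma dotvZl a u w : dotv (a *: u) w = a * dotv u w.
Proof. by rewrite /dotv mulr_sumr; apply: eq_bigr => i _; rewrite mxE mulrA. Qed.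

Lemma dotvZr a u w : dotv w (a *: u) = a * dotv w u.
Proof. by rewrite dotvC dotvZl dotvC. Qed.

Lemma dotvBl u v w : dotv (u - v) w = dotv u w - dotv v w.
Proof. by rewrite dotvDl -scaleN1r dotvZl mulN1r. Qed.

Lemma dotvBr u v w : dotv w (u - v) = dotv w u - dotv w v.
Proof. by rewrite dotvC dotvBl !(dotvC w). Qed.

Lemma sqnormZ a u : sqnorm (a *: u) = a ^+ 2 * sqnorm u.
Proof. by rewrite /sqnorm dotvZl dotvZr mulrA expr2. Qed.

Lemma sqnormN u : sqnorm (- u) = sqnorm u.
Proof. by rewrite -scaleN1r sqnormZ sqrrN expr1n mul1r. Qed.

Lemma sqnormB u v : sqnorm (u - v) = sqnorm u - 2 * dotv u v + sqnorm v.
Proof. rewrite /sqnorm dotvBl !dotvBr (dotvC v u); ring. Qed.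

Lemma three_point u w z :
  2 * dotv (u - w) (z - w) = sqnorm (u - w) + sqnorm (z - w) - sqnorm (z - u).
Proof.
have -> : z - u = (z - w) - (u - w) by rewrite opprB addrA subrK.
rewrite (sqnormB (z - w)) (dotvC (z - w)); ring.
Qed.

End Euclidean.

Lemma dotv_grad (R : realType) (n : nat) (f : 'rV[R]_n -> R) (y d : 'rV[R]_n) :
  dotv (grad f y) d = 'd f y d.
Proof.
rewrite /dotv /grad [in RHS](row_sum_delta d) linear_sum /=.
by apply: eq_bigr => i _; rewrite mxE linearZ /= mulrC.
Qed.

Section ConvexGradient.
Local Open Scope classical_set_scope.
Variables (R : realType) (n : nat) (f : 'rV[R]_n -> R).
Hypothesis f_convex : convex_fun f.

Lemma convex_difference_quotient_le (y z : 'rV[R]_n) (h : R) : 0 < h <= 1 ->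
  h^-1 * (f (h *: (z - y) + y) - f y) <= f z - f y.
Proof.
case/andP=> h_gt0 h_le1.
have -> : h *: (z - y) + y = h *: z + (1 - h) *: y.
  by apply/rowP => j; rewrite !mxE; ring.
rewrite ler_pdivrMl // lerBlDl.
apply: (le_trans (f_convex z y (t := h) _)); first by rewrite (ltW h_gt0) h_le1.
lra.
Qed.

Lemma convex_gradient_ineq (y z : 'rV[R]_n) :
  differentiable_everywhere f -> f y + dotv (grad f y) (z - y) <= f z.
Proof.
move=> df; rewrite dotv_grad -deriveE // -lerBrDl.
have dv : derivable f y (z - y) by exact: diff_derivable.
rewrite /derive cvg_at_rightE //; apply: limr_le.
  by apply: cvgP; apply: cvg_dnbhs_at_right; exact: dv.
near=> h; apply: convex_difference_quotient_le; apply/andP; split.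
  by near: h; exact: nbhs_right_gt.
by apply/ltW; near: h; exact: nbhs_right_lt.
Unshelve. all: by end_near.
Qed.

End ConvexGradient.

Section InexactProximalStep.
Variables (R : realType) (n : nat) (f : 'rV[R]_n -> R) (g : 'rV[R]_n -> \bar R).
Hypotheses (f_convex : convex_fun f) (f_diff : differentiable_everywhere f).

Lemma approx_prox_descent (B r e : R) (y xt z : 'rV[R]_n) :
  approx_prox f g (B + r) e y xt ->
  bregman f xt y <= B / 2 * sqnorm (xt - y) ->
  ((f xt)%:E + g xt
     + (r / 2 * sqnorm (xt - y) + (B + r) / 2 * sqnorm (z - xt)
        - (B + r) / 2 * sqnorm (z - y) - e)%:E <= (f z)%:E + g z)%E.
Proof.
move=> [v [[gxt_fin v_subgrad] optimality]] bregman_le.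
have v_grad : v + grad f y = (B + r) *: (y - xt).
  by apply/rowP => j; move/rowP/(_ j): optimality; rewrite !mxE; lra.
have linearized : dotv v (z - xt) + dotv (grad f y) (z - y) - dotv (grad f y) (xt - y)
    = (B + r) / 2 * (sqnorm (xt - y) + sqnorm (z - xt) - sqnorm (z - y)).
  rewrite -addrA -dotvBr opprB addrA subrK -dotvDl v_grad dotvZl.
  rewrite -[sqnorm (xt - y)]sqnormN opprB -three_point mulrA divfK // pnatr_eq0.
have f_lower := convex_gradient_ineq f_convex y z f_diff.
rewrite /bregman in bregman_le.
have := v_subgrad z; move: gxt_fin; case: (g xt) => // gxt _.
case: (g z) => [gz | | ]; last 2 first.
- by move=> _; rewrite addey ?leey.
- by move=> /=; rewrite leeNy_eq.
rewrite /= !lee_fin => g_lower; lra.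
Qed.

End InexactProximalStep.

Lemma composite_convex (R : realType) (n : nat) (f : 'rV[R]_n -> R)
    (g : 'rV[R]_n -> \bar R) (t : R) (u w : 'rV[R]_n) :
  convex_fun f -> convex_efun g -> 0 <= t <= 1 ->
  ((f (t *: u + (1 - t) *: w)%R)%:E + g (t *: u + (1 - t) *: w)%R
    <= t%:E * ((f u)%:E + g u) + (1 - t)%:E * ((f w)%:E + g w))%E.
Proof.
move=> f_convex g_convex t01.
rewrite !muleDr ?fin_num_adde_defr // addeACA -!EFinM -EFinD.
by apply: leeD; [rewrite lee_fin; exact: f_convex | exact: g_convex].
Qed.

Lemma ereal_lerp_shift (R : realType) (c : R) (a b : \bar R) : b \is a fin_num ->
  (c%:E * (a - b) + b = c%:E * a + (1 - c)%:E * b)%E.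
Proof.
move=> b_fin; rewrite muleBr ?fin_num_adde_defl ?fin_numN //.
move: b_fin; case: b => // b _; rewrite -addeA; congr (_ + _)%E.
by rewrite /= -EFinM -EFinD; congr EFin; ring.
Qed.

Theorem lemma3p2 (R : realType) (n : nat)
  (f : 'rV[R]_n -> R) (g : 'rV[R]_n -> \bar R) (L : R)
  (alpha B rho eps : nat -> R)
  (xm1 xom1 : 'rV[R]_n) (y x xo : nat -> 'rV[R]_n) :
  convex_fun f -> differentiable_everywhere f -> lipschitz_smooth f L ->
  proper_fun g -> closed_fun g -> convex_efun g ->
  (forall k, 0 < alpha k <= 1) ->
  (forall k, 0 < B k) -> (forall k, 0 <= rho k) -> (forall k, 0 < eps k) ->
  (forall k, y k = alpha k *: prevs xom1 xo k + (1 - alpha k) *: prevs xm1 x k) ->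
  (forall k, approx_prox f g (B k + rho k) (eps k) (y k) (x k)) ->
  (forall k, bregman f (x k) (y k) <= B k / 2 * sqnorm (x k - y k)) ->
  (forall k, xo k = prevs xm1 x k + (alpha k)^-1 *: (x k - prevs xm1 x k)) ->
  let F := fun u => ((f u)%:E + g u)%E in
  forall xbar : 'rV[R]_n, g xbar \is a fin_num ->
  forall k : nat,
    ((rho k / 2 * sqnorm (x k - y k) - eps k)%:E <=
      (1 - alpha k)%:E * (F (prevs xm1 x k) - F xbar) + F xbar - F (x k)
      + (alpha k ^+ 2 * (B k + rho k) / 2 * sqnorm (xbar - prevs xom1 xo k))%:E
      - (alpha k ^+ 2 * (B k + rho k) / 2 * sqnorm (xbar - xo k))%:E)%E.
Proof.
move=> f_convex f_diff _ _ _ g_convex alpha01 _ _ _ y_def x_prox x_descent xo_def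
  F xbar gxbar_fin k.
set a := alpha k; set xp := prevs xm1 x k; set xop := prevs xom1 xo k.
have /andP[a_gt0 a_le1] : 0 < a <= 1 := alpha01 k.
set z := a *: xbar + (1 - a) *: xp.
have z_x : z - x k = a *: (xbar - xo k).
  rewrite /z xo_def -/a -/xp; apply/rowP => j; rewrite !mxE.
  by field; rewrite gt_eqF.
have z_y : z - y k = a *: (xbar - xop).
  by rewrite /z y_def -/a -/xp -/xop; apply/rowP => j; rewrite !mxE; ring.
have descent := approx_prox_descent f_convex f_diff z (x_prox k) (x_descent k).
rewrite z_x z_y !sqnormZ in descent.
have F_z : (F z <= a%:E * F xbar + (1 - a)%:E * F xp)%E.
  by apply: composite_convex; rewrite ?(ltW a_gt0).
have Fxbar_fin : F xbar \is a fin_num by rewrite fin_numD gxbar_fin.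
have := le_trans descent F_z; set W := (a%:E * F xbar + _)%E.
rewrite ereal_lerp_shift // subKr (addeC ((1 - a)%:E * F xp)%E) -/W.
move: W => W {descent F_z}.
have [v [[gx_fin _] _]] := x_prox k.
rewrite /F; move: gx_fin; case: (g (x k)) => // gx _.
case: W => [w | | ] //=; last by move=> _; rewrite !addye //; exact: leey.
by rewrite -!EFinD !lee_fin; lra.
Qed.
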